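(* Let $S\subseteq M_n$ and $T\subseteq M_{n'}$ be noncommutative graphs. Then $\mathcal{H}(S\otimes T)\leq \mathcal{H}(S)\,\mathcal{H}(T)$.
   Context: All scalars are complex; $M_n$ denotes complex $n\times n$ matrices. A noncommutative graph is a linear subspace $S\subseteq M_n$ that contains $I_n$ and is closed under conjugate transpose. For subspaces $S\subseteq M_n$, $T\subseteq M_{n'}$, $S\otimes T=\mathrm{span}\{A\otimes B: A\in S, B\in T\}\subseteq M_{nn'}$ (Kronecker product). For a subspace $S\subseteq M_n$, $M_m(S)$ denotes the set of $m\times m$ block matrices $B=[B_{i,j}]_{i,j\in[m]}$ with every block $B_{i,j}\in S$, viewed as elements of $M_{mn}$. The Haemers bound of a noncommutative graph $S\subseteq M_n$ is $\mathcal{H}(S)=\min\{\mathrm{rk}(B):\ m\in\mathbb{N},\ B\in M_m(S),\ \sum_{i=1}^m B_{i,i}=I_n\}$. *)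

(* Complex numbers are modelled as [complex R] (= R[i]) for
   an arbitrary real field [R : realType] (so in particular R = the reals, C = ℂ). *)
From HB Require Import structures.
From mathcomp Require Import all_boot all_order all_algebra.
From mathcomp Require Import complex mxtens.
From mathcomp Require Import reals.
Set Implicit Arguments. Unset Strict Implicit. Unset Printing Implicit Defensive.
Import Order.TTheory GRing.Theory Num.Theory.
Local Open Scope ring_scope.

Section NCGraph.
Variable R : realType.
Local Notation C := (complex R).

Definition adjmx (n : nat) (A : 'M[C]_n) : 'M[C]_n := map_mx Num.conj A^T.

Definition nc_graph (n : nat) (S : {vspace 'M[C]_n}) : Prop :=
  (1%:M : 'M[C]_n) \in S /\ forall A : 'M[C]_n, A \in S -> adjmx A \in S.

(* S ⊗ T = span { A ⊗ B : A ∈ S, B ∈ T } (Kronecker product [*t] of mxtens),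
   as a predicate on 'M_(n * n'): finite linear combinations of products
   (scalars can be absorbed, but we keep them to literally mirror "span"). *)
Definition tens_space (n n' : nat) (S : {vspace 'M[C]_n}) (T : {vspace 'M[C]_n'})
  (M : 'M[C]_(n * n')) : Prop :=
  exists (k : nat) (c : 'I_k -> C) (A : 'I_k -> 'M[C]_n) (B : 'I_k -> 'M[C]_n'),
    (forall i, A i \in S) /\ (forall i, B i \in T) /\
    M = \sum_(i < k) c i *: (A i *t B i).

(* block (i,j) (of size n x n) of an (m*n) x (m*n) matrix; the row index
   mxtens_index (i, k) has value i * n + k *)
Definition blockmx (m n : nat) (B : 'M[C]_(m * n)) (i j : 'I_m) : 'M[C]_n :=
  \matrix_(k, l) B (mxtens_index (i, k)) (mxtens_index (j, l)).

Definition haemers_feasible (n : nat) (P : 'M[C]_n -> Prop) (r : nat) : Prop :=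
  exists (m : nat) (B : 'M[C]_(m * n)),
    (forall i j, P (blockmx B i j)) /\
    \sum_(i < m) blockmx B i i = 1%:M /\
    \rank B = r.

Definition is_haemers (n : nat) (P : 'M[C]_n -> Prop) (h : nat) : Prop :=
  haemers_feasible P h /\ forall r, haemers_feasible P r -> (h <= r)%N.

End NCGraph.

(* Take minimisers B1 in M_m1(S) and B2 in M_m2(T).  Their Kronecker
   product B1 ⊗ B2 has rank at most rk B1 · rk B2, and after regrouping its rows
   and columns into m1·m2 blocks of size n·n' its (i,j),(i',j') block is
   (B1)_(i,i') ⊗ (B2)_(j,j') ∈ S ⊗ T.  The diagonal blocks then sum to
   (Σ_i (B1)_(i,i)) ⊗ (Σ_j (B2)_(j,j)) = I_n ⊗ I_n' = I_(nn'), so the regrouped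
   matrix is feasible for S ⊗ T. *)
From HB Require Import structures.
From mathcomp Require Import all_boot all_order all_algebra.
From mathcomp Require Import complex mxtens.
From mathcomp Require Import reals.
Set Implicit Arguments. Unset Strict Implicit. Unset Printing Implicit Defensive.
Import GRing.Theory.
Local Open Scope ring_scope.

Section TensmxRing.
Variable R : pzRingType.

Lemma tensmxDl m n p q (A A' : 'M[R]_(m, n)) (B : 'M[R]_(p, q)) :
  (A + A') *t B = A *t B + A' *t B.
Proof. by apply/matrixP=> i j; rewrite !mxE mulrDl. Qed.

Lemma tensmxDr m n p q (A : 'M[R]_(m, n)) (B B' : 'M[R]_(p, q)) :
  A *t (B + B') = A *t B + A *t B'.
Proof. by apply/matrixP=> i j; rewrite !mxE mulrDr. Qed.

Lemma tensmx_suml m n p q I (r : seq I) (P : pred I)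
    (A : I -> 'M[R]_(m, n)) (B : 'M[R]_(p, q)) :
  (\sum_(i <- r | P i) A i) *t B = \sum_(i <- r | P i) A i *t B.
Proof. exact: (big_morph (fun X : 'M[R]_(m, n) => X *t B) (fun X Y => tensmxDl X Y B) (tens0mx B)). Qed.

Lemma tensmx_sumr m n p q I (r : seq I) (P : pred I)
    (A : 'M[R]_(m, n)) (B : I -> 'M[R]_(p, q)) :
  A *t (\sum_(i <- r | P i) B i) = \sum_(i <- r | P i) A *t B i.
Proof. exact: (big_morph (fun Y : 'M[R]_(p, q) => A *t Y) (tensmxDr A) (tensmx0 A)). Qed.

Lemma tensmx11 m n : (1%:M : 'M[R]_m) *t (1%:M : 'M[R]_n) = 1%:M.
Proof.
apply/matrixP=> i j.
case: (mxtens_indexP i)=> i1 i2; case: (mxtens_indexP j)=> j1 j2.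
rewrite tensmxE !mxE -natrM (inj_eq (can_inj (@mxtens_indexK _ _))).
by rewrite xpair_eqE; case: (i1 == j1); case: (i2 == j2).
Qed.

End TensmxRing.

Section RankField.
Variable F : fieldType.

Lemma mxrank_tensmx m n p q (A : 'M[F]_(m, n)) (B : 'M[F]_(p, q)) :
  (\rank (A *t B) <= \rank A * \rank B)%N.
Proof.
rewrite -{1}(mulmx_base A) -{1}(mulmx_base B) -tensmx_mul.
apply: leq_trans (mxrankM_maxl _ _) _.
exact: rank_leq_col.
Qed.

Lemma mxrank_rowsub m1 m2 n (f : 'I_m2 -> 'I_m1) (A : 'M[F]_(m1, n)) :
  (\rank (rowsub f A) <= \rank A)%N.
Proof. exact/mxrankS/rowsub_sub. Qed.

Lemma mxrank_colsub m n1 n2 (g : 'I_n2 -> 'I_n1) (A : 'M[F]_(m, n1)) :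
  (\rank (colsub g A) <= \rank A)%N.
Proof. by rewrite -mxrank_tr trmx_mxsub -[leqRHS]mxrank_tr mxrank_rowsub. Qed.

Lemma mxrank_mxsub m1 m2 n1 n2 (f : 'I_m2 -> 'I_m1) (g : 'I_n2 -> 'I_n1)
    (A : 'M[F]_(m1, n1)) :
  (\rank (mxsub f g A) <= \rank A)%N.
Proof. by rewrite mxsubrc (leq_trans (mxrank_rowsub _ _)) ?mxrank_colsub. Qed.

End RankField.

Section BlockTensor.
Variable R : realType.
Local Notation C := (complex R).

(* Sends the row index ((i, j), (k, l)) of (B1 ⊗ B2)_regrouped to ((i, k), (j, l)),
   its position in B1 ⊗ B2. *)
Definition blocktens_index m1 m2 n1 n2 (k : 'I_((m1 * m2) * (n1 * n2))) :
    'I_((m1 * n1) * (m2 * n2)) :=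
  let: (i, p) := mxtens_unindex k in
  mxtens_index (mxtens_index ((mxtens_unindex i).1, (mxtens_unindex p).1),
                mxtens_index ((mxtens_unindex i).2, (mxtens_unindex p).2)).

Definition blocktensmx m1 m2 n1 n2 (B1 : 'M[C]_(m1 * n1)) (B2 : 'M[C]_(m2 * n2)) :
    'M[C]_((m1 * m2) * (n1 * n2)) :=
  mxsub (@blocktens_index m1 m2 n1 n2) (@blocktens_index m1 m2 n1 n2) (B1 *t B2).

Definition blocktr m n (B : 'M[C]_(m * n)) : 'M[C]_n := \sum_(i < m) blockmx B i i.

Variables (m1 m2 n1 n2 : nat) (B1 : 'M[C]_(m1 * n1)) (B2 : 'M[C]_(m2 * n2)).

Lemma blockmx_blocktensmx i1 i2 j1 j2 :
  blockmx (blocktensmx B1 B2) (mxtens_index (i1, i2)) (mxtens_index (j1, j2)) =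
  blockmx B1 i1 j1 *t blockmx B2 i2 j2.
Proof.
apply/matrixP=> k l.
case: (mxtens_indexP k)=> k1 k2; case: (mxtens_indexP l)=> l1 l2.
by rewrite !mxE /blocktens_index !mxtens_indexK.
Qed.

Lemma mxrank_blocktensmx :
  (\rank (blocktensmx B1 B2) <= \rank B1 * \rank B2)%N.
Proof. exact: leq_trans (mxrank_mxsub _ _ _) (mxrank_tensmx _ _). Qed.

Lemma blocktr_blocktensmx :
  blocktr (blocktensmx B1 B2) = blocktr B1 *t blocktr B2.
Proof.
rewrite /blocktr tensmx_suml; under [RHS]eq_bigr do rewrite tensmx_sumr.
rewrite pair_bigA (reindex (@mxtens_index m1 m2)); last first.
  by exists (@mxtens_unindex m1 m2) => k _; rewrite ?mxtens_indexK ?mxtens_unindexK.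
by apply: eq_bigr => -[i j] _; rewrite blockmx_blocktensmx.
Qed.

End BlockTensor.

Lemma haemers_feasible_tensmx (R : realType) (n1 n2 : nat)
    (P1 : 'M[complex R]_n1 -> Prop) (P2 : 'M[complex R]_n2 -> Prop)
    (P : 'M[complex R]_(n1 * n2) -> Prop) (r1 r2 : nat) :
  (forall A1 A2, P1 A1 -> P2 A2 -> P (A1 *t A2)) ->
  haemers_feasible P1 r1 -> haemers_feasible P2 r2 ->
  exists2 r, (r <= r1 * r2)%N & haemers_feasible P r.
Proof.
move=> P_tens [m1 [B1 [PB1 [trB1 <-]]]] [m2 [B2 [PB2 [trB2 <-]]]].
exists (\rank (blocktensmx B1 B2)); first exact: mxrank_blocktensmx.
exists (m1 * m2)%N, (blocktensmx B1 B2); split; [|split] => //.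
- move=> a b; case: (mxtens_indexP a) => i1 i2; case: (mxtens_indexP b) => j1 j2.
  by rewrite blockmx_blocktensmx; apply: P_tens.
- by rewrite -[LHS]/(blocktr _) blocktr_blocktensmx /blocktr trB1 trB2 tensmx11.
Qed.

Lemma tens_space_tensmx (R : realType) (n1 n2 : nat)
    (S : {vspace 'M[complex R]_n1}) (T : {vspace 'M[complex R]_n2}) A B :
  A \in S -> B \in T -> tens_space S T (A *t B).
Proof.
move=> SA TB; exists 1%N, (fun=> 1), (fun=> A), (fun=> B).
by do 2!split=> //; rewrite big_ord1 scale1r.
Qed.

Theorem mainTheorem2 (R : realType) (n n' : nat)
  (S : {vspace 'M[complex R]_n}) (T : {vspace 'M[complex R]_n'})
  (hS : nc_graph S) (hT : nc_graph T) (hHS hHT hHST : nat) :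
  is_haemers (fun A => A \in S) hHS ->
  is_haemers (fun A => A \in T) hHT ->
  is_haemers (tens_space S T) hHST ->
  (hHST <= hHS * hHT)%N.
Proof.
move=> [feasS _] [feasT _] [_ minST].
have [r le_r feas_r] := haemers_feasible_tensmx (@tens_space_tensmx R n n' S T) feasS feasT.
exact: leq_trans (minST r feas_r) le_r.
Qed.
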